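(* Let $V$ be a finite set, $\mu\colon\binom V2\to\mathbb{Z}_+$, and suppose $V=V_1\sqcup V_2$ with $V_1,V_2$ nonempty and $\mu(e)=1$ for every edge $e$ with one endpoint in $V_1$ and the other in $V_2$. Then $(\Delta_V)_\mu\cong(\Delta_{V_1})_{\mu_1}\ast(\Delta_{V_2})_{\mu_2}$, where $\mu_1,\mu_2$ are the restrictions of $\mu$ to $\binom{V_1}{2}$ and $\binom{V_2}{2}$.
   Context: $\Delta_V$ is the full simplex on $V$, viewed as the simplicial poset of nonempty subsets of $V$. Edge inflation: for $\mu\colon\binom V2\to\mathbb{Z}_+$, $(\Delta_V)_\mu$ is the poset of pairs $(I,c_I)$ with $\varnothing\neq I\subseteq V$ and $c_I\colon\binom I2\to\mathbb{Z}_+$, $c_I(e)\in\{1,\dots,\mu(e)\}$, ordered by $(I,c_I)<(J,c_J)$ iff $I\subsetneq J$ and $c_I=c_J|_{\binom I2}$. The join $K_1\ast K_2$ of simplicial posets is the simplicial poset whose simplices are $J_1\ast J_2$ with $J_i\in K_i$ or empty (not both empty), ordered componentwise. *)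

From mathcomp Require Import all_boot.
Set Implicit Arguments. Unset Strict Implicit. Unset Printing Implicit Defensive.

(* Edge multiplicities: mu : {set W} -> nat, only its values on 2-element
   subsets (edges of binom(W,2)) matter. *)

(* A simplex of the edge-inflated simplex (Delta_W)_mu: a nonempty I and a
   colouring c_I of binom(I,2) with c_I(e) in {1..mu e}.  The colouring is
   stored as a finite function on all subsets, normalised to 0 off binom(I,2)
   so that equality of simplices is equality of pairs (I, c_I). *)
Definition is_edge (W : finType) (I e : {set W}) : bool :=
  (e \subset I) && (#|e| == 2).

Definition infl_valid (W : finType) (mu : {set W} -> nat)
    (p : {set W} * {ffun {set W} -> nat}) : bool :=
  [&& p.1 != set0,
      [forall e : {set W}, is_edge p.1 e ==> (0 < p.2 e <= mu e)] &
      [forall e : {set W}, ~~ is_edge p.1 e ==> (p.2 e == 0)]].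

Definition infl (W : finType) (mu : {set W} -> nat) : Type :=
  {p : {set W} * {ffun {set W} -> nat} | infl_valid mu p}.

Definition infl_lt (W : finType) (mu : {set W} -> nat) (x y : infl mu) : Prop :=
  ((sval x).1 \proper (sval y).1) /\
  forall e : {set W}, is_edge (sval x).1 e -> (sval x).2 e = (sval y).2 e.

Definition join_t (K1 K2 : Type) : Type :=
  {p : option K1 * option K2 | isSome p.1 || isSome p.2}.

Definition opt_le (K : Type) (lt : K -> K -> Prop) (a b : option K) : Prop :=
  match a, b with
  | None, _ => True
  | Some _, None => False
  | Some x, Some y => x = y \/ lt x y
  end.

Definition join_lt (K1 K2 : Type) (lt1 : K1 -> K1 -> Prop) (lt2 : K2 -> K2 -> Prop)
    (x y : join_t K1 K2) : Prop :=
  sval x <> sval y /\ opt_le lt1 (sval x).1 (sval y).1 /\ opt_le lt2 (sval x).2 (sval y).2.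

Definition poset_iso (A B : Type) (ltA : A -> A -> Prop) (ltB : B -> B -> Prop) : Prop :=
  exists f : A -> B, bijective f /\ forall x y, ltA x y <-> ltB (f x) (f y).

Definition restr_mu (V : finType) (A : {set V}) (mu : {set V} -> nat)
    : {set {x : V | x \in A}} -> nat :=
  fun e => mu [set val x | x in e].

From mathcomp Require Import all_boot.
Set Implicit Arguments. Unset Strict Implicit. Unset Printing Implicit Defensive.

(* A simplex (I, c) of the inflated simplex on V is determined by its traces on
   V1 and V2: an edge of I meeting both parts has multiplicity 1, so its colour
   is forced to be 1.  Conversely two coloured simplices on V1 and V2, not both
   empty, glue to one on V by colouring the crossing edges with 1.  Restriction
   and gluing are inverse to each other, and (I, c) lies below (J, d) exactly
   when both traces do, since colours of crossing edges always agree. *)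

Section Colourings.

Variables (W : finType) (mu : {set W} -> nat).

(* Possibly empty coloured simplices: the empty one plays the role of the
   missing component of a simplex of a join. *)
Definition coloured := ({set W} * {ffun {set W} -> nat})%type.

Definition is_colouring (p : coloured) : bool :=
  [forall e, is_edge p.1 e ==> (0 < p.2 e <= mu e)] &&
  [forall e, ~~ is_edge p.1 e ==> (p.2 e == 0)].

Definition col_le (p q : coloured) : Prop :=
  p.1 \subset q.1 /\ forall e, is_edge p.1 e -> p.2 e = q.2 e.

Definition empty_coloured : coloured := (set0, [ffun => 0]).

Definition coloured_of (o : option (infl mu)) : coloured :=
  odflt empty_coloured (omap val o).

Lemma is_colouringP (p : coloured) :
  reflect ((forall e, is_edge p.1 e -> 0 < p.2 e <= mu e) /\
           (forall e, ~~ is_edge p.1 e -> p.2 e = 0))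
          (is_colouring p).
Proof.
apply: (iffP andP) => [[/forallP c_edge /forallP c_off] | [c_edge c_off]].
  by split=> e e_p; [exact: (implyP (c_edge e)) | exact/eqP/(implyP (c_off e))].
by split; apply/forallP=> e; apply/implyP=> e_p; [exact: c_edge | exact/eqP/c_off].
Qed.

Lemma is_edge_set0 (e : {set W}) : is_edge set0 e = false.
Proof. by rewrite /is_edge subset0; case: eqP => // ->; rewrite cards0. Qed.

Lemma eq_colouring (p q : coloured) :
  is_colouring p -> is_colouring q -> col_le p q -> p.1 = q.1 -> p = q.
Proof.
case: p q => [I c] [J d] /is_colouringP [_ c_off] /is_colouringP [_ d_off] /=.
move=> [_ agree] IJ; subst J; congr pair; apply/ffunP=> e.
by case: (boolP (is_edge I e)) => [/agree | e_I]; last rewrite c_off ?d_off.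
Qed.

Lemma colouring_empty : is_colouring empty_coloured.
Proof. by apply/is_colouringP; split=> e; rewrite ?is_edge_set0 ?ffunE. Qed.

Lemma colouring_set0 (p : coloured) :
  is_colouring p -> p.1 = set0 -> p = empty_coloured.
Proof.
move=> c_p p0; apply: (eq_colouring c_p colouring_empty _ p0).
by split=> [|e]; rewrite p0 ?sub0set ?is_edge_set0.
Qed.

Lemma infl_validE (p : coloured) :
  infl_valid mu p = (p.1 != set0) && is_colouring p.
Proof. by []. Qed.

Lemma colouring_infl (x : infl mu) : is_colouring (val x).
Proof. by have := valP x; rewrite infl_validE => /andP []. Qed.

Lemma isSome_insub (p : coloured) :
  is_colouring p -> isSome (insub p : option (infl mu)) = (p.1 != set0).
Proof.
by move=> c_p; case: insubP => [u | ]; rewrite infl_validE c_p andbT // => /negbTE.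
Qed.

Lemma coloured_ofK : cancel coloured_of (insub : coloured -> option (infl mu)).
Proof.
by case=> [u | ] /=; [exact: valK | apply: insubN; rewrite infl_validE eqxx].
Qed.

Lemma insubK_colouring (p : coloured) :
  is_colouring p -> coloured_of (insub p) = p.
Proof.
move=> c_p; case: insubP => [u _ <- // | ].
by rewrite infl_validE c_p andbT negbK => /eqP /(colouring_set0 c_p) ->.
Qed.

Lemma colouring_coloured_of (o : option (infl mu)) : is_colouring (coloured_of o).
Proof. by case: o => [x | ] /=; [exact: colouring_infl | exact: colouring_empty]. Qed.

Lemma isSome_coloured_of (o : option (infl mu)) :
  isSome o = ((coloured_of o).1 != set0).
Proof. by rewrite -isSome_insub ?colouring_coloured_of // coloured_ofK. Qed.

Lemma infl_ltE (x y : infl mu) :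
  infl_lt x y <-> val x <> val y /\ col_le (val x) (val y).
Proof.
split=> [[xy agree] | [ne [sub agree]]].
  split; last by split; first exact: proper_sub.
  by move=> E; move: xy; rewrite E properxx.
split=> //; rewrite properEneq sub andbT; apply/eqP => E; apply: ne.
exact: eq_colouring (colouring_infl x) (colouring_infl y) (conj sub agree) E.
Qed.

Lemma opt_le_insub (p q : coloured) : is_colouring p -> is_colouring q ->
  opt_le (@infl_lt W mu) (insub p) (insub q) <-> col_le p q.
Proof.
move=> c_p c_q; case: insubP => [u | ]; last first.
  rewrite infl_validE c_p andbT negbK => /eqP p0; split=> // _.
  by split=> [|e]; rewrite p0 ?sub0set ?is_edge_set0.
rewrite infl_validE c_p andbT => p_ne0 up.
case: insubP => [w _ wq | ] /=; last first.
  rewrite infl_validE c_q andbT negbK => /eqP q0; split=> // - [].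
  by rewrite q0 subset0 (negbTE p_ne0).
split=> [[uw | /infl_ltE [_]] | le_pq].
- by rewrite -up -wq uw; split.
- by rewrite up wq.
have [pq | ne] := eqVneq p q; first by left; apply: val_inj; rewrite up wq.
by right; apply/infl_ltE; rewrite up wq; split=> //; apply/eqP.
Qed.

End Colourings.

Section Restriction.

Variables (V : finType) (A : {set V}).

Local Notation VA := {x : V | x \in A}.

Definition restr_set (I : {set V}) : {set VA} := [set x | val x \in I].

Definition restr (p : coloured V) : coloured VA :=
  (restr_set p.1, [ffun e : {set VA} => p.2 (val @: e)]).

Lemma restr_set0 : restr_set set0 = set0.
Proof. by apply/setP=> x; rewrite !inE. Qed.

Lemma restr_setS (I J : {set V}) : I \subset J -> restr_set I \subset restr_set J.
Proof. by move=> IJ; apply/subsetP=> x; rewrite !inE; apply: (subsetP IJ). Qed.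

Lemma imset_val_restr_set (e : {set V}) : e \subset A -> val @: restr_set e = e.
Proof.
move=> eA; apply/setP=> x; apply/imsetP/idP => [[y] | x_e].
  by rewrite inE => y_e ->.
by exists (exist _ x (subsetP eA x x_e)); rewrite ?inE.
Qed.

Lemma restr_set_imset_val (e : {set VA}) : restr_set (val @: e) = e.
Proof. by apply/setP=> x; rewrite inE mem_imset //; exact: val_inj. Qed.

Lemma is_edge_restr_set (I : {set V}) (e : {set VA}) :
  is_edge (restr_set I) e = is_edge I (val @: e).
Proof.
rewrite /is_edge card_imset; last exact: val_inj.
congr andb; apply/subsetP/subsetP => [sub _ /imsetP [x x_e ->] | sub x x_e].
  by have := sub x x_e; rewrite inE.
by rewrite inE; apply: sub; apply: imset_f.
Qed.

Lemma colouring_restr (mu : {set V} -> nat) (p : coloured V) :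
  is_colouring mu p -> is_colouring (@restr_mu _ A mu) (restr p).
Proof.
move=> /is_colouringP [c_edge c_off]; apply/is_colouringP.
by split=> e /=; rewrite ffunE is_edge_restr_set; [exact: c_edge | exact: c_off].
Qed.

Lemma col_le_restr (p q : coloured V) : col_le p q -> col_le (restr p) (restr q).
Proof.
move=> [sub agree]; split; first exact: restr_setS.
by move=> e /=; rewrite !ffunE is_edge_restr_set => /agree.
Qed.

Lemma col_le_restr_edge (p q : coloured V) (e : {set V}) :
  col_le (restr p) (restr q) -> e \subset A -> is_edge p.1 e -> p.2 e = q.2 e.
Proof.
move=> [_ agree] eA e_p; have := agree (restr_set e).
by rewrite /= !ffunE is_edge_restr_set imset_val_restr_set //; apply.
Qed.

Lemma restr_colour_bound (mu : {set V} -> nat) (a : coloured VA) (I e : {set V}) :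
  is_colouring (@restr_mu _ A mu) a -> restr_set I = a.1 -> e \subset A ->
  is_edge I e -> 0 < a.2 (restr_set e) <= mu e.
Proof.
move=> /is_colouringP [c_edge _] Ia eA e_I; have := c_edge (restr_set e).
rewrite /restr_mu imset_val_restr_set //; apply.
by rewrite -Ia is_edge_restr_set imset_val_restr_set.
Qed.

Lemma restr_eq (mu' : {set VA} -> nat) (p : coloured V) (a : coloured VA) :
  is_colouring mu' a -> restr_set p.1 = a.1 ->
  (forall e : {set V}, e \subset A -> is_edge p.1 e -> p.2 e = a.2 (restr_set e)) ->
  (forall e, ~~ is_edge p.1 e -> p.2 e = 0) ->
  restr p = a.
Proof.
case: a => [J d] /is_colouringP [_ d_off] /= pJ p_edge p_off.
rewrite /restr pJ; congr pair; apply/ffunP=> e; rewrite ffunE.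
have [e_p | e_p] := boolP (is_edge p.1 (val @: e)).
  rewrite p_edge ?restr_set_imset_val //.
  by apply/subsetP=> _ /imsetP [x _ ->]; exact: valP.
by rewrite p_off // d_off // -pJ is_edge_restr_set.
Qed.

End Restriction.

Lemma restr_set_imsetU (V : finType) (A B : {set V}) (a : {set {x : V | x \in A}})
    (b : {set {x : V | x \in B}}) :
  A :&: B = set0 -> restr_set A (val @: a :|: val @: b) = a.
Proof.
move=> AB; apply/setP=> x; rewrite inE in_setU mem_imset; last exact: val_inj.
case: (x \in a) => //=; apply/imsetP=> - [y _ yx].
have : sval y \in A :&: B by rewrite inE -yx (valP x) yx (valP y).
by rewrite AB inE.
Qed.

Section Partition.

Variables (V : finType) (mu : {set V} -> nat) (V1 V2 : {set V}).
Hypothesis Hmu : forall e : {set V}, #|e| = 2 -> 0 < mu e.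
Hypothesis Hdisj : V1 :&: V2 = set0.
Hypothesis Hcov : V1 :|: V2 = [set: V].
Hypothesis Hcross : forall x y : V, x \in V1 -> y \in V2 -> mu [set x; y] = 1.

Local Notation V1' := {x : V | x \in V1}.
Local Notation V2' := {x : V | x \in V2}.
Local Notation mu1 := (@restr_mu _ V1 mu).
Local Notation mu2 := (@restr_mu _ V2 mu).

(* Crossing edges get colour 1, the only colour their multiplicity allows. *)
Definition glue (a1 : coloured V1') (a2 : coloured V2') : coloured V :=
  let I := val @: a1.1 :|: val @: a2.1 in
  (I, [ffun e => if is_edge I e then
                   if e \subset V1 then a1.2 (restr_set V1 e)
                   else if e \subset V2 then a2.2 (restr_set V2 e) else 1
                 else 0]).

Lemma restr_set_cover (I : {set V}) :
  val @: restr_set V1 I :|: val @: restr_set V2 I = I.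
Proof.
apply/setP=> x; apply/setUP/idP => [[] /imsetP [y] | x_I].
- by rewrite inE => ? ->.
- by rewrite inE => ? ->.
have : x \in V1 :|: V2 by rewrite Hcov inE.
by case/setUP=> xV; [left | right]; apply/imsetP; exists (exist _ x xV); rewrite ?inE.
Qed.

Lemma edge_not_sub_both (e : {set V}) :
  #|e| = 2 -> e \subset V1 -> ~~ (e \subset V2).
Proof.
move=> e2 eV1; apply/negP=> eV2; have : e \subset V1 :&: V2 by rewrite subsetI eV1.
by rewrite Hdisj subset0 => /eqP e0; rewrite e0 cards0 in e2.
Qed.

Lemma crossing_edge_mu (e : {set V}) :
  #|e| = 2 -> ~~ (e \subset V1) -> ~~ (e \subset V2) -> mu e = 1.
Proof.
move=> e2 /subsetPn [x x_e xV1] /subsetPn [y y_e yV2].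
have in_cover z : z \in V1 :|: V2 by rewrite Hcov inE.
have xV2 : x \in V2 by have := in_cover x; rewrite inE (negbTE xV1).
have yV1 : y \in V1 by have := in_cover y; rewrite inE (negbTE yV2) orbF.
have yx : y != x by apply: contraNneq xV1 => <-.
suff -> : e = [set y; x] by exact: Hcross.
apply/esym/eqP; rewrite eqEcard cards2 yx e2 andbT.
by apply/subsetP=> z; rewrite !inE => /orP [] /eqP ->.
Qed.

Lemma crossing_colour (p : coloured V) (e : {set V}) :
  is_colouring mu p -> is_edge p.1 e -> ~~ (e \subset V1) -> ~~ (e \subset V2) ->
  p.2 e = 1.
Proof.
move=> /is_colouringP [c_edge _] e_p eV1 eV2; have := c_edge e e_p.
case/andP: e_p => _ /eqP e2; rewrite crossing_edge_mu //.
by case: (p.2 e) => [|[]].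
Qed.

Lemma restr_glue1 (a1 : coloured V1') (a2 : coloured V2') :
  is_colouring mu1 a1 -> restr V1 (glue a1 a2) = a1.
Proof.
move=> c1; apply: restr_eq c1 _ _ _ => [|e eV1 e_I|e e_I] /=; rewrite ?ffunE.
- exact: restr_set_imsetU.
- by rewrite e_I eV1.
- by rewrite (negbTE e_I).
Qed.

Lemma restr_glue2 (a1 : coloured V1') (a2 : coloured V2') :
  is_colouring mu2 a2 -> restr V2 (glue a1 a2) = a2.
Proof.
move=> c2; apply: restr_eq c2 _ _ _ => [|e eV2 e_I|e e_I] /=; rewrite ?ffunE.
- by rewrite setUC restr_set_imsetU // setIC.
- rewrite e_I eV2; case: ifP => // eV1; case/andP: e_I => _ /eqP e2.
  by rewrite (negbTE (edge_not_sub_both e2 eV1)) in eV2.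
- by rewrite (negbTE e_I).
Qed.

Lemma colouring_glue (a1 : coloured V1') (a2 : coloured V2') :
  is_colouring mu1 a1 -> is_colouring mu2 a2 -> is_colouring mu (glue a1 a2).
Proof.
move=> c1 c2; apply/is_colouringP; split=> e /=; rewrite ffunE; last by move/negbTE ->.
move=> e_I; rewrite e_I; case: ifP => [eV1 | _].
  apply: (restr_colour_bound c1 _ eV1 e_I).
  by rewrite -[in RHS](restr_glue1 a2 c1).
case: ifP => [eV2 | _]; last by case/andP: e_I => _ /eqP /Hmu.
apply: (restr_colour_bound c2 _ eV2 e_I).
by rewrite -[in RHS](restr_glue2 a1 c2).
Qed.

Lemma glue_restr (p : coloured V) :
  is_colouring mu p -> glue (restr V1 p) (restr V2 p) = p.
Proof.
move=> c_p; have /is_colouringP [_ c_off] := c_p.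
case: p c_p c_off => [I c] c_p c_off; rewrite /glue /= restr_set_cover.
congr pair; apply/ffunP=> e; rewrite !ffunE.
have [e_I | e_I] := boolP (is_edge I e); last by rewrite c_off.
case: ifP => [eV1 | eV1]; first by rewrite imset_val_restr_set.
case: ifP => [eV2 | eV2]; first by rewrite imset_val_restr_set.
by rewrite (crossing_colour c_p) ?eV1 ?eV2.
Qed.

Lemma col_le_restrP (p q : coloured V) : is_colouring mu p -> is_colouring mu q ->
  col_le p q <-> col_le (restr V1 p) (restr V1 q) /\ col_le (restr V2 p) (restr V2 q).
Proof.
move=> c_p c_q; split=> [le_pq | [le1 le2]].
  by split; apply: col_le_restr.
have sub : p.1 \subset q.1.
  rewrite -(restr_set_cover p.1) -(restr_set_cover q.1).
  by apply: setUSS; apply: imsetS; [case: le1 | case: le2].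
split=> // e e_p; case: (boolP (e \subset V1)) => [eV1 | eV1].
  exact: col_le_restr_edge le1 eV1 e_p.
case: (boolP (e \subset V2)) => [eV2 | eV2].
  exact: col_le_restr_edge le2 eV2 e_p.
have e_q : is_edge q.1 e.
  by case/andP: e_p => e_sub e2; rewrite /is_edge e2 (subset_trans e_sub sub).
by rewrite !crossing_colour.
Qed.

Lemma split_nonempty (x : infl mu) :
  isSome (insub (restr V1 (val x)) : option (infl mu1)) ||
  isSome (insub (restr V2 (val x)) : option (infl mu2)).
Proof.
rewrite !isSome_insub ?colouring_restr ?colouring_infl //=.
have /andP [x_ne0 _] := valP x.
apply: contraNT x_ne0 => /norP [/negbNE/eqP V1x0 /negbNE/eqP V2x0].
by rewrite -(restr_set_cover (val x).1) V1x0 V2x0 !imset0 setU0.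
Qed.

Definition split_simplex (x : infl mu) : join_t (infl mu1) (infl mu2) :=
  exist _ (insub (restr V1 (val x)), insub (restr V2 (val x))) (split_nonempty x).

Lemma glue_valid (y : join_t (infl mu1) (infl mu2)) :
  infl_valid mu (glue (coloured_of (sval y).1) (coloured_of (sval y).2)).
Proof.
set a1 := coloured_of (sval y).1; set a2 := coloured_of (sval y).2.
have [c1 c2] : is_colouring mu1 a1 /\ is_colouring mu2 a2.
  by split; apply: colouring_coloured_of.
rewrite infl_validE colouring_glue // andbT.
have := valP y; rewrite !isSome_coloured_of -/a1 -/a2.
rewrite -(congr1 fst (restr_glue1 a2 c1)) -(congr1 fst (restr_glue2 a1 c2)) /=.
by move=> ne; apply/eqP => I0; move: ne; rewrite I0 !restr_set0 !eqxx.
Qed.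

Definition glue_simplex (y : join_t (infl mu1) (infl mu2)) : infl mu :=
  exist (infl_valid mu) _ (glue_valid y).

Lemma split_simplexK : cancel split_simplex glue_simplex.
Proof.
move=> x; apply: val_inj => /=.
rewrite !insubK_colouring ?colouring_restr ?colouring_infl //.
exact: glue_restr (colouring_infl x).
Qed.

Lemma glue_simplexK : cancel glue_simplex split_simplex.
Proof.
move=> y; apply: val_inj => /=.
rewrite restr_glue1 ?restr_glue2 ?colouring_coloured_of // !coloured_ofK.
by case: (sval y).
Qed.

Lemma split_simplex_lt (x y : infl mu) :
  infl_lt x y <->
  join_lt (@infl_lt _ mu1) (@infl_lt _ mu2) (split_simplex x) (split_simplex y).
Proof.
have [cx cy] := (colouring_infl x, colouring_infl y).
have le_restr A : col_le (restr A (val x)) (restr A (val y)) <->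
    opt_le (@infl_lt _ (@restr_mu _ A mu))
      (insub (restr A (val x))) (insub (restr A (val y))).
  by apply: iff_sym; apply: opt_le_insub; apply: colouring_restr.
apply: iff_trans (infl_ltE x y) _; rewrite /join_lt /=.
split=> [[ne /(col_le_restrP cx cy) [le1 le2]] | [ne [le1 le2]]].
  split; last by split; apply/le_restr.
  by move=> E; apply: ne; congr val; apply: (can_inj split_simplexK); exact: val_inj.
split; first by move=> /val_inj E; apply: ne; rewrite E.
by apply/(col_le_restrP cx cy); split; apply/le_restr.
Qed.

End Partition.

Theorem proposition4p9 (V : finType) (mu : {set V} -> nat)
    (V1 V2 : {set V})
    (Hmu : forall e : {set V}, #|e| = 2 -> 0 < mu e)
    (Hdisj : V1 :&: V2 = set0) (Hcov : V1 :|: V2 = [set: V])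
    (H1 : V1 != set0) (H2 : V2 != set0)
    (Hcross : forall x y : V, x \in V1 -> y \in V2 -> mu [set x; y] = 1) :
  poset_iso (@infl_lt V mu)
    (join_lt (@infl_lt _ (@restr_mu V V1 mu)) (@infl_lt _ (@restr_mu V V2 mu))).
Proof.
exists (split_simplex Hcov); split.
  exact: Bijective (split_simplexK Hmu Hdisj Hcov Hcross) (glue_simplexK Hmu Hdisj Hcov).
exact: split_simplex_lt.
Qed.
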